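(* Up to isomorphism, the only $5$-regular, $1$ net-regular SRSG whose underlying graph is complete (i.e. $K_6$) is $\dot G_2$, the signed $K_6$ whose negative edges form two vertex-disjoint triangles; it has parameters $(6,5,-4,4)$. Moreover, no connected $5$-regular $1$ net-regular SRSG belongs to $\mathcal C_2$.
   Context: A signed graph $\dot G=(G,\sigma)$ is a simple graph $G$ with $\sigma:E(G)\to\{\pm1\}$; adjacency matrix $A_{\dot G}$ has entries $\sigma(v_iv_j)$ for adjacent vertices and $0$ otherwise. Net-degree is $d^+(v)-d^-(v)$; $\rho$ net-regular means all net-degrees equal $\rho$. $\dot G$ on $n$ vertices is an SRSG if it is neither homogeneous (all edges of one sign) complete nor edgeless and there are $r\in\mathbb N$, $a,b,c\in\mathbb Z$ with $(A^2_{\dot G})_{ii}=r$, $(A^2_{\dot G})_{ij}=a$ for positive edges, $b$ for negative edges, $c$ for distinct non-adjacent pairs; parameters $(n,r,a,b)$ when $G$ is complete. $\mathcal C_2$ is the class of inhomogeneous non-complete SRSGs with $a=-b$ and $c=0$. Isomorphism means sign-preserving graph isomorphism. *)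

(* A signed graph on vertex set 'I_n is represented by its
   signed adjacency matrix A : 'M[int]_n (entries in {-1,0,1}, symmetric,
   zero diagonal); A i j = sigma(ij) if i~j and 0 otherwise. *)
From HB Require Import structures.
From mathcomp Require Import all_boot all_order all_algebra all_fingroup.
Set Implicit Arguments. Unset Strict Implicit. Unset Printing Implicit Defensive.
Import Order.TTheory GRing.Theory Num.Theory.
Local Open Scope ring_scope.

Definition signed_adj n (A : 'M[int]_n) : Prop :=
  (forall i, A i i = 0) /\ (forall i j, A i j = A j i) /\
  (forall i j, A i j = 0 \/ A i j = 1 \/ A i j = -1).

Definition deg n (A : 'M[int]_n) (i : 'I_n) : nat := #|[set j | A i j != 0]|.
Definition pdeg n (A : 'M[int]_n) (i : 'I_n) : nat := #|[set j | A i j == 1]|.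
Definition ndeg n (A : 'M[int]_n) (i : 'I_n) : nat := #|[set j | A i j == -1]|.
Definition net_deg n (A : 'M[int]_n) (i : 'I_n) : int := (pdeg A i)%:Z - (ndeg A i)%:Z.

Definition regular n (A : 'M[int]_n) (k : nat) : Prop := forall i, deg A i = k.
Definition net_regular n (A : 'M[int]_n) (rho : int) : Prop :=
  forall i, net_deg A i = rho.

Definition complete n (A : 'M[int]_n) : Prop := forall i j, i != j -> A i j != 0.
Definition edgeless n (A : 'M[int]_n) : Prop := forall i j, A i j = 0.
Definition homogeneous n (A : 'M[int]_n) : Prop :=
  (forall i j, A i j != -1) \/ (forall i j, A i j != 1).
Definition homogeneous_complete n (A : 'M[int]_n) : Prop :=
  complete A /\ homogeneous A.

Definition connected n (A : 'M[int]_n) : Prop :=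
  forall i j, connect (fun x y => A x y != 0) i j.

Definition SRSG_params n (A : 'M[int]_n) (r : nat) (a b c : int) : Prop :=
  ~ homogeneous_complete A /\ ~ edgeless A /\
  (forall i, (A *m A) i i = r%:Z) /\
  (forall i j, i != j -> A i j = 1 -> (A *m A) i j = a) /\
  (forall i j, i != j -> A i j = -1 -> (A *m A) i j = b) /\
  (forall i j, i != j -> A i j = 0 -> (A *m A) i j = c).

Definition is_SRSG n (A : 'M[int]_n) : Prop :=
  exists (r : nat) (a b c : int), SRSG_params A r a b c.

Definition in_C2 n (A : 'M[int]_n) : Prop :=
  ~ homogeneous A /\ ~ complete A /\
  exists (r : nat) (a b : int), SRSG_params A r a b 0 /\ a = - b.

Definition sg_iso n m (A : 'M[int]_n) (B : 'M[int]_m) : Prop :=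
  exists f : 'I_n -> 'I_m, bijective f /\ forall i j, A i j = B (f i) (f j).

(* signed K_6 whose negative edges form the triangles {0,1,2} and {3,4,5} *)
Definition G2 : 'M[int]_6 :=
  \matrix_(i, j) (if i == j then 0
                  else if ((i < 3)%N == (j < 3)%N) then -1 else 1).

(* A net-regular signed graph with net-degree rho has constant row sums rho, so
   every row of A^2 sums to rho^2 = 1.  If the underlying graph is K_6, write
   A = J - I - 2N with N the (2-regular) negative adjacency matrix; off the
   diagonal A^2 = -4 + 4N + 4N^2, and 1 = 5 + 3a + 2b forces a = -4, b = 4.
   Hence N^2 vanishes on positive edges: the negative edges are transitive and
   split the six vertices into two triangles.  In C_2 the SRSG equations read
   A^2 = 5I + aA, the row sums force a = -4, and then adjacent vertices share
   all their other four neighbours; closed neighbourhoods are constant along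
   edges, so a connected such graph would be complete. *)

From HB Require Import structures.
From mathcomp Require Import all_boot all_order all_algebra all_fingroup.
From mathcomp Require Import zify.
Import Order.TTheory GRing.Theory Num.Theory.
Set Implicit Arguments. Unset Strict Implicit. Unset Printing Implicit Defensive.
Local Open Scope ring_scope.

Lemma sum_indicator n (P : pred 'I_n) : \sum_k ((P k)%:R : int) = #|[set k | P k]|%:Z.
Proof.
rewrite -sum1_card -natz natr_sum [RHS]big_mkcond /=; apply: eq_bigr => k _.
by rewrite inE; case: (P k).
Qed.

Lemma sum_delta n (i : 'I_n) (G : 'I_n -> int) : \sum_k ((k == i)%:R * G k) = G i.
Proof.
by rewrite (bigD1 i) //= eqxx mul1r big1 ?addr0 // => k /negbTE ->; rewrite mul0r.
Qed.

Lemma split_bij n (C : {set 'I_n}) :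
  exists f : 'I_n -> 'I_n, bijective f /\ forall i, (f i < #|C|)%N = (i \in C).
Proof.
case: n C => [|n] C.
  by exists id; split; [exists id | case].
pose s := enum C ++ enum (~: C).
have s_all i : i \in s by rewrite mem_cat !mem_enum in_setC orbN.
have size_s : size s = n.+1 by rewrite size_cat -!cardE cardsC card_ord.
pose f i : 'I_n.+1 := inord (index i s).
have fE i : nat_of_ord (f i) = index i s.
  by rewrite inordK //; have := index_mem i s; rewrite s_all size_s.
exists f; split.
  apply: inj_card_bij => [i j /(congr1 (@nat_of_ord _))|//].
  by rewrite !fE; apply: index_inj.
move=> i; rewrite fE index_cat mem_enum cardE.
by case: ifP => [iC|_]; [rewrite index_mem mem_enum | rewrite ltnNge leq_addr].
Qed.

Lemma equiv_two_classes (T : finType) (R : rel T) (x0 : T) k :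
  symmetric R -> transitive R ->
  (forall x, #|[set y | R x y]| = k) -> #|T| = (k + k)%N ->
  forall x y, R x y = (R x0 x == R x0 y).
Proof.
move=> Rsym Rtr Rcard cardT x y.
have R_x0 u v : R x0 u -> R u v = R x0 v.
  move=> Ru; apply/idP/idP => [/(Rtr _ _ _ Ru) //|]; rewrite Rsym in Ru.
  by move/(Rtr _ _ _ Ru).
case Rx: (R x0 x); first by rewrite (R_x0 _ _ Rx) eq_sym; case: (R x0 y).
case Ry: (R x0 y) => /=.
  by apply/negbTE; rewrite Rsym (R_x0 _ _ Ry) Rx.
have class_x : [set z | R x z] = ~: [set z | R x0 z].
  have cardC : #|~: [set z | R x0 z]| = k.
    by have := cardsC [set z | R x0 z]; rewrite Rcard cardT => /addnI.
  apply/eqP; rewrite eqEcard cardC Rcard leqnn andbT.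
  apply/subsetP => z; rewrite !inE => Rxz; apply: contraFN Rx => R0z.
  by rewrite -(R_x0 _ _ R0z) Rsym.
by apply/esym; have := in_setC y [set z | R x0 z]; rewrite -class_x !inE Ry.
Qed.

Section SignedAdjacency.

Variables (n : nat) (A : 'M[int]_n).
Hypothesis SA : signed_adj A.

Let A_diag i : A i i = 0. Proof. by case: SA. Qed.
Let A_sym i j : A i j = A j i. Proof. by case: SA => _ []. Qed.
Let A_entry i j : A i j = 0 \/ A i j = 1 \/ A i j = -1. Proof. by case: SA => _ []. Qed.

Lemma net_deg_sum i : \sum_j A i j = net_deg A i.
Proof.
rewrite /net_deg /pdeg /ndeg -!sum_indicator -sumrB; apply: eq_bigr => j _.
by case: (A_entry i j) => [->|[->|->]].
Qed.

Lemma pdeg_add_ndeg i : (pdeg A i + ndeg A i)%N = deg A i.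
Proof.
apply/eqP; rewrite -eqz_nat PoszD /pdeg /ndeg /deg -!sum_indicator -big_split.
by apply/eqP/eq_bigr => j _ /=; case: (A_entry i j) => [->|[->|->]].
Qed.

Lemma sqr_diag i : (A *m A) i i = (deg A i)%:Z.
Proof.
rewrite mxE /deg -sum_indicator; apply: eq_bigr => k _.
by rewrite (A_sym k i); case: (A_entry i k) => [->|[->|->]].
Qed.

Lemma sqr_row_sum rho i : net_regular A rho -> \sum_j (A *m A) i j = rho ^+ 2.
Proof.
move=> netA; under eq_bigr do rewrite mxE.
rewrite exchange_big /= (eq_bigr (fun k => A i k * rho)) => [|k _].
  by rewrite -mulr_suml net_deg_sum netA expr2.
by rewrite -mulr_sumr net_deg_sum netA.
Qed.

Lemma abs_sqr_le_common i j :
  `|(A *m A) i j| <= #|[set k | (A i k != 0) && (A k j != 0)]|%:Z.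
Proof.
rewrite mxE -sum_indicator; apply: le_trans (ler_norm_sum _ _ _) _.
apply: ler_sum => k _; rewrite normrM.
by case: (A_entry i k) => [->|[->|->]]; case: (A_entry k j) => [->|[->|->]].
Qed.

(* The d common neighbours exhaust the d neighbours of i other than j. *)
Lemma nbr_adj_of_common d i j k : regular A d.+1 -> A i j != 0 ->
  d%:Z <= `|(A *m A) i j| -> A i k != 0 -> k != j -> A k j != 0.
Proof.
move=> regA Aij sqr_ge Aik kj.
set N := [set l | A i l != 0]; set S := [set l | (A i l != 0) && (A l j != 0)].
have S_sub : S \subset N :\ j.
  apply/subsetP => l; rewrite !inE => /andP[-> Alj]; rewrite andbT.
  by apply: contraNneq Alj => ->; rewrite A_diag.
have card_Nj : #|N :\ j| = d.
  by have := cardsD1 j N; rewrite inE Aij; have := regA i; rewrite /deg -/N => -> [].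
have card_S : (d <= #|S|)%N.
  by rewrite -lez_nat; apply: le_trans sqr_ge (abs_sqr_le_common i j).
have /eqP S_eq : S == N :\ j by rewrite eqEcard S_sub card_Nj.
have : k \in N :\ j by rewrite !inE kj Aik.
by rewrite -S_eq inE => /andP[].
Qed.

Lemma complete_of_nbr_adj : connected A ->
  (forall i j k, A i j != 0 -> A i k != 0 -> k != j -> A k j != 0) -> complete A.
Proof.
move=> connA nbr_adj.
pose M i := [set k | (i == k) || (A i k != 0)].
have M_edge i j : A i j != 0 -> M j \subset M i.
  move=> Aij; apply/subsetP => k; rewrite !inE => /orP[/eqP <-|Ajk].
    by rewrite Aij orbT.
  have [//|ki /=] := eqVneq k i; rewrite A_sym.
  by apply: (nbr_adj j); rewrite // A_sym.
have M_path i j : M j \subset M i.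
  case/connectP: (connA i j) => p; elim: p i => [|l p IHp] i /=; first by move=> _ ->.
  by case/andP => Ail p_path j_last; apply: subset_trans (M_edge _ _ Ail); apply: IHp.
move=> i j ij; have /subsetP/(_ j) := M_path i j.
by rewrite !inE eqxx (negbTE ij) => /(_ isT).
Qed.

Lemma SRSG_sqr_entry r a b c i j : SRSG_params A r a b c ->
  (A *m A) i j = (i == j)%:R * r%:Z + (A i j == 1)%:R * a + (A i j == -1)%:R * b
                 + ((i != j) && (A i j == 0))%:R * c.
Proof.
case=> _ [_ [sqr_r [sqr_a [sqr_b sqr_c]]]].
have [<-|ij] := eqVneq i j; first by rewrite sqr_r A_diag eqxx /= mul1r !mul0r !addr0.
case: (A_entry i j) => [Aij|[Aij|Aij]];
  [rewrite (sqr_c _ _ ij Aij) | rewrite (sqr_a _ _ ij Aij) | rewrite (sqr_b _ _ ij Aij)];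
  by rewrite Aij /= !(mul0r, mul1r, addr0, add0r).
Qed.

Lemma SRSG_row_sum r a b c i : SRSG_params A r a b c ->
  \sum_j (A *m A) i j = r%:Z + a * (pdeg A i)%:Z + b * (ndeg A i)%:Z
                        + c * #|[set j | (j != i) && (A i j == 0)]|%:Z.
Proof.
move=> srsg; under eq_bigr => j _ do rewrite (SRSG_sqr_entry _ _ srsg) [i == j]eq_sym.
rewrite !big_split /= (sum_delta i (fun=> r%:Z)) -!mulr_suml !sum_indicator.
by rewrite [_ * a]mulrC [_ * b]mulrC [_ * c]mulrC.
Qed.

Lemma SRSG_deg r a b c i : SRSG_params A r a b c -> deg A i = r.
Proof. by case=> _ [_ [sqr_r _]]; apply/eqP; rewrite -eqz_nat -sqr_diag sqr_r. Qed.

Lemma complete_deg i : complete A -> deg A i = n.-1.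
Proof.
move=> compA; rewrite /deg (_ : [set j | A i j != 0] = [set~ i]) ?cardsC1 ?card_ord //.
apply/setP => j; rewrite !inE.
by have [->|ji] := eqVneq j i; rewrite ?A_diag // compA // eq_sym.
Qed.

Lemma complete_entry i k : complete A ->
  A i k = 1 - (i == k)%:R - 2 * (A i k == -1)%:R.
Proof.
move=> compA; have [<-|ik] := eqVneq i k; first by rewrite A_diag.
have := compA i k ik; case: (A_entry i k) => [->|[->|->]] //= _; lia.
Qed.

(* Expand A = J - I - 2N, with N the negative adjacency matrix. *)
Lemma complete_sqr_entry i j : complete A -> i != j ->
  (A *m A) i j = net_deg A j - 1 - 2 * (ndeg A i)%:Z + 4 * (A i j == -1)%:R
                 + 4 * #|[set k | (A i k == -1) && (A k j == -1)]|%:Z.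
Proof.
move=> compA ij; pose x u v : int := (A u v == -1)%:R.
have sum_Aj : \sum_k A k j = net_deg A j.
  by rewrite -net_deg_sum; apply: eq_bigr => k _; rewrite A_sym.
have sum_xA : \sum_k x i k * A k j = (ndeg A i)%:Z - x i j - 2 * \sum_k x i k * x k j.
  under eq_bigr => k _ do rewrite (complete_entry k j compA) !mulrBr mulr1 mulrCA.
  rewrite !sumrB -mulr_sumr /ndeg -sum_indicator.
  under [X in _ - X - _]eq_bigr => k _ do rewrite mulrC.
  by rewrite sum_delta.
rewrite mxE; under eq_bigr => k _ do
  rewrite (complete_entry i k compA) [i == _]eq_sym !mulrBl mul1r -mulrA.
have sum_xx : \sum_k x i k * x k j = #|[set k | (A i k == -1) && (A k j == -1)]|%:Z.
  by rewrite -sum_indicator; apply: eq_bigr => k _; rewrite -natrM mulnb.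
rewrite !sumrB sum_Aj sum_delta -mulr_sumr sum_xA sum_xx -/(x i j).
rewrite (complete_entry i j compA) (negbTE ij) -/(x i j) /=; lia.
Qed.

End SignedAdjacency.

Lemma not_edgeless_gt0 n (A : 'M[int]_n) : ~ edgeless A -> (0 < n)%N.
Proof. by case: n A => // A; case; case. Qed.

Section FiveRegularNetOne.

Variables (n : nat) (A : 'M[int]_n).
Hypotheses (SA : signed_adj A) (regA : regular A 5) (netA : net_regular A 1).

Lemma ndeg_pdeg_5_1 i : ndeg A i = 2%N /\ pdeg A i = 3%N.
Proof.
have := pdeg_add_ndeg SA i; have := netA i; rewrite /net_deg regA; lia.
Qed.

Lemma SRSG_5_1_row_sum r a b c i : SRSG_params A r a b c ->
  1 = 5 + 3 * a + 2 * b + c * #|[set j | (j != i) && (A i j == 0)]|%:Z.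
Proof.
move=> srsg; have := sqr_row_sum SA i netA; rewrite (SRSG_row_sum SA i srsg).
have [-> ->] := ndeg_pdeg_5_1 i; rewrite -(SRSG_deg SA i srsg) regA expr1n.
by rewrite [a * _]mulrC [b * _]mulrC.
Qed.

Lemma C2_5_1_complete r a b : connected A -> SRSG_params A r a b 0 -> a = - b ->
  complete A.
Proof.
move=> connA srsg ab; subst a; have [A_diag [_ A_entry]] := SA.
have i0 : 'I_n by apply: Ordinal (not_edgeless_gt0 (proj1 (proj2 srsg))).
have := SRSG_5_1_row_sum i0 srsg; rewrite mul0r addr0 => a_eq.
have sqr_adj i j : A i j != 0 -> 4%:Z <= `|(A *m A) i j|.
  move=> Aij; rewrite (SRSG_sqr_entry SA i j srsg).
  have ij : i != j by apply: contraNneq Aij => ->; rewrite A_diag.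
  by rewrite (negbTE ij); case: (A_entry i j) Aij => [->|[->|->]] //= _; lia.
apply: complete_of_nbr_adj => // i j k Aij Aik kj.
by apply: (nbr_adj_of_common SA regA Aij (sqr_adj i j Aij)).
Qed.

Section Complete.

Hypothesis compA : complete A.

Let sqr_entry i j : i != j -> (A *m A) i j
  = -4 + 4 * (A i j == -1)%:R + 4 * #|[set k | (A i k == -1) && (A k j == -1)]|%:Z.
Proof.
move=> ij; rewrite (complete_sqr_entry SA compA ij) netA.
by have [-> _] := ndeg_pdeg_5_1 i; lia.
Qed.

(* [a = -4 + 4s] and [b = 4t] with [s, t >= 0], while [A 1 = 1] gives
   [3a + 2b = -4]: the only solution is [s = 0], [t = 1]. *)
Lemma complete_5_1_SRSG_ab r a b c : SRSG_params A r a b c -> a = -4 /\ b = 4.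
Proof.
move=> srsg; have [A_diag _] := SA; have [_ [_ [_ [sqr_a [sqr_b _]]]]] := srsg.
have i0 : 'I_n by apply: Ordinal (not_edgeless_gt0 (proj1 (proj2 srsg))).
have [ndeg2 pdeg3] := ndeg_pdeg_5_1 i0.
have [jp Ajp] : exists j, A i0 j = 1.
  have /card_gt0P[j] : (0 < pdeg A i0)%N by rewrite pdeg3.
  by rewrite inE => /eqP; exists j.
have [jn Ajn] : exists j, A i0 j = -1.
  have /card_gt0P[j] : (0 < ndeg A i0)%N by rewrite ndeg2.
  by rewrite inE => /eqP; exists j.
have ne_of_adj j : A i0 j != 0 -> i0 != j by apply: contraNneq => <-; rewrite A_diag.
have ijp : i0 != jp by rewrite ne_of_adj // Ajp.
have ijn : i0 != jn by rewrite ne_of_adj // Ajn.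
have a_eq := sqr_a _ _ ijp Ajp; rewrite sqr_entry // Ajp /= in a_eq.
have b_eq := sqr_b _ _ ijn Ajn; rewrite sqr_entry // Ajn /= in b_eq.
have := SRSG_5_1_row_sum i0 srsg.
have -> : #|[set j | (j != i0) && (A i0 j == 0)]| = 0%N.
  apply: eq_card0 => j; rewrite !inE; apply/negP => /andP[ji /eqP].
  by apply/eqP; apply: compA; rewrite eq_sym.
rewrite mulr0 addr0; lia.
Qed.

(* A positive edge closing a path of two negative edges would have a
   common negative neighbour, making its [A^2] entry at least [0 > a]. *)
Lemma complete_5_1_neg_trans r b c i j k : SRSG_params A r (-4) b c ->
  i != j -> A i k = -1 -> A k j = -1 -> A i j = -1.
Proof.
move=> srsg ij Aik Akj; have [_ [_ A_entry]] := SA; have [_ [_ [_ [sqr_a _]]]] := srsg.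
case: (A_entry i j) => [Aij|[Aij|//]]; first by have := compA ij; rewrite Aij.
have := sqr_a _ _ ij Aij; rewrite sqr_entry // Aij (cardsD1 k) inE Aik Akj eqxx /=.
rewrite mulr0 addr0; lia.
Qed.

End Complete.

End FiveRegularNetOne.

Lemma sg_iso_G2_of_split (A : 'M[int]_6) (C : {set 'I_6}) : signed_adj A -> complete A ->
  #|C| = 3%N -> (forall i j, i != j -> (A i j == -1) = ((i \in C) == (j \in C))) ->
  sg_iso A G2.
Proof.
move=> [A_diag [_ A_entry]] compA cardC negC.
have [f [f_bij fC]] := split_bij C; rewrite cardC in fC.
exists f; split=> // i j; rewrite mxE (bij_eq f_bij) !fC.
have [<-|ij] := eqVneq i j; first exact: A_diag.
rewrite -negC //; case: (A_entry i j) => [Aij|[->|->]] //.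
by have := compA _ _ ij; rewrite Aij.
Qed.

Lemma complete_5_1_iso_G2 (A : 'M[int]_6) : signed_adj A -> complete A ->
  regular A 5 -> net_regular A 1 ->
  (forall i j k, i != j -> A i k = -1 -> A k j = -1 -> A i j = -1) -> sg_iso A G2.
Proof.
move=> SA compA regA netA neg_trans; have [A_diag [A_sym _]] := SA.
pose R i j := (i == j) || (A i j == -1).
have R_sym : symmetric R by move=> i j; rewrite /R eq_sym A_sym.
have R_trans : transitive R.
  move=> k i j /orP[/eqP -> //|/eqP Aik] /orP[/eqP <-|/eqP Akj].
    by rewrite /R Aik eqxx orbT.
  by rewrite /R; have [//|ij] := eqVneq i j; rewrite (neg_trans _ _ _ ij Aik Akj) eqxx.
have R_class i : #|[set j | R i j]| = 3%N.
  have -> : [set j | R i j] = i |: [set j | A i j == -1].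
    by apply/setP => j; rewrite !inE /R [i == j]eq_sym.
  have [ndeg2 _] := ndeg_pdeg_5_1 SA regA netA i.
  by rewrite cardsU1 inE A_diag /=; move: ndeg2; rewrite /ndeg => ->.
apply: (@sg_iso_G2_of_split _ [set j | R ord0 j]) => // i j ij.
by rewrite !inE -(equiv_two_classes _ R_sym R_trans R_class) ?card_ord // /R (negbTE ij).
Qed.

Lemma G2_sqr i j : (G2 *m G2) i j =
  if i == j then 5 else if (i < 3)%N == (j < 3)%N then 4 else -4.
Proof.
rewrite !mxE !big_ord_recl big_ord0 !mxE.
by case: i => [[|[|[|[|[|[|//]]]]]] ?]; case: j => [[|[|[|[|[|[|//]]]]]] ?].
Qed.

Lemma G2_degs i : [/\ pdeg G2 i = 3, ndeg G2 i = 2 & deg G2 i = 5]%N.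
Proof.
rewrite /pdeg /ndeg /deg.
by split; rewrite -sum1_card big_mkcond !big_ord_recl big_ord0 !inE !mxE /=;
  case: i => [[|[|[|[|[|[|//]]]]]] ?].
Qed.

Lemma G2_props : signed_adj G2 /\ complete G2 /\ regular G2 5 /\ net_regular G2 1 /\
  SRSG_params G2 5 (-4) 4 0.
Proof.
have G2_ne i j : i != j -> G2 i j = if (i < 3)%N == (j < 3)%N then -1 else 1.
  by move=> ij; rewrite mxE (negbTE ij).
pose o k (lt_k6 : (k < 6)%N) := Ordinal lt_k6.
have G2_01 : G2 (o 0 isT) (o 1 isT) = -1 by rewrite mxE.
have G2_03 : G2 (o 0 isT) (o 3 isT) = 1 by rewrite mxE.
split.
  split; first by move=> i; rewrite mxE eqxx.
  split; first by move=> i j; rewrite !mxE eq_sym [((j < 3)%N == _)]eq_sym.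
  move=> i j; have [<-|/G2_ne ->] := eqVneq i j; first by rewrite mxE eqxx; left.
  by case: ifP => _; right; [right | left].
split; first by move=> i j /G2_ne ->; case: ifP.
split; first by move=> i; case: (G2_degs i).
split; first by move=> i; rewrite /net_deg; case: (G2_degs i) => -> -> _.
split; first by case=> _ [/(_ (o 0 isT) (o 1 isT)) | /(_ (o 0 isT) (o 3 isT))];
  rewrite ?G2_01 ?G2_03.
split; first by move/(_ (o 0 isT) (o 1 isT)); rewrite G2_01.
split; first by move=> i; rewrite G2_sqr eqxx.
by split; [|split]; move=> i j ij; rewrite G2_sqr G2_ne // (negbTE ij); case: ifP.
Qed.

Theorem mainTheorem14 :
  (signed_adj G2 /\ complete G2 /\ regular G2 5 /\ net_regular G2 1 /\
   SRSG_params G2 5 (-4) 4 0) /\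
  (forall (n : nat) (A : 'M[int]_n),
     signed_adj A -> complete A -> regular A 5 -> net_regular A 1 ->
     is_SRSG A ->
     sg_iso A G2 /\ exists c : int, SRSG_params A 5 (-4) 4 c) /\
  (forall (n : nat) (A : 'M[int]_n),
     signed_adj A -> connected A -> regular A 5 -> net_regular A 1 ->
     is_SRSG A -> ~ in_C2 A).
Proof.
split; first exact: G2_props.
split=> [n A SA compA regA netA [r [a [b [c srsg]]]] |
         n A SA connA regA netA _ [_ [not_compA [r [a [b [srsg ab]]]]]]]; last first.
  exact/not_compA/(C2_5_1_complete SA regA netA connA srsg ab).
have [a_eq b_eq] := complete_5_1_SRSG_ab SA regA netA compA srsg; subst a b.
have n_gt0 := not_edgeless_gt0 (proj1 (proj2 srsg)).
have r_eq : r = 5%N by rewrite -(SRSG_deg SA (Ordinal n_gt0) srsg) regA.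
subst r; split; last by exists c.
have n_eq : n = 6%N by have := complete_deg SA (Ordinal n_gt0) compA; rewrite regA; lia.
subst n; apply: complete_5_1_iso_G2 => // i j k.
exact: complete_5_1_neg_trans srsg.
Qed.
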